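(* Let $\Sigma$ and $\Gamma$ be finite alphabets, each with at least two letters, let $a,b\in\Sigma$ be distinct letters, and let $w \in \{a,b\}^+$. The following are equivalent: 1. $\mathrm{E}_{\mathcal{I}}(w) = \infty$. 2. $\mathrm{E}_{\mathcal{I}}(w) > |w|$. 3. There exist integers $k, j_1, j_2, j_3 \ge 0$ such that $w = b^{j_1} (a b^{j_2})^k a b^{j_3}$ or $w = a^{j_1} (b a^{j_2})^k b a^{j_3}$.
   Context: For a nonempty word $v$ and integer $p\ge 0$, $v^{p/|v|}$ denotes the prefix of length $p$ of $vvv\cdots$. For a nonempty finite word $u$, $\mathrm{E}(u) = \sup\{ r \in \mathbb{Q} : u = v^r \text{ for some nonempty word } v\}$. $\mathcal{I}$ is the set of injective morphisms $\Sigma^* \to \Gamma^*$, and $\mathrm{E}_{\mathcal{I}}(w) = \sup\{\mathrm{E}(h(w)) : h \in \mathcal{I}\}$. *)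

From mathcomp Require Import all_boot all_order all_algebra.
From mathcomp Require Import boolp classical_sets reals constructive_ereal ereal.
From mathcomp Require Import Rstruct.

Set Implicit Arguments.
Unset Strict Implicit.
Unset Printing Implicit Defensive.

Import Order.TTheory GRing.Theory Num.Theory.
Local Open Scope classical_set_scope.
Local Open Scope ring_scope.

Notation RR := Rdefinitions.R.

Section Words.
Variable T : eqType.

(* v^{p/|v|} : the prefix of length p of v v v ... (for v nonempty) *)
Definition rpow (v : seq T) (p : nat) : seq T := take p (flatten (nseq p v)).

Definition is_pow (u v : seq T) (r : rat) : Prop :=
  v != [::] /\ exists p : nat, r = p%:R / (size v)%:R /\ u = rpow v p.

Definition Eexp (u : seq T) : \bar RR :=
  ereal_sup [set ((ratr r : RR)%:E) | r in [set r : rat | exists v, is_pow u v r]].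
End Words.

Definition is_morphism (S G : Type) (h : seq S -> seq G) : Prop :=
  forall u v, h (u ++ v) = h u ++ h v.

Definition EI (S : Type) (G : eqType) (w : seq S) : \bar RR :=
  ereal_sup [set Eexp (h w) | h in
    [set h : seq S -> seq G | is_morphism h /\ injective h]].

From mathcomp Require Import all_boot all_order all_algebra.
From mathcomp Require Import boolp classical_sets reals constructive_ereal ereal.
From mathcomp Require Import Rstruct zify.

Set Implicit Arguments.
Unset Strict Implicit.
Unset Printing Implicit Defensive.

Import Order.TTheory GRing.Theory Num.Theory.

(* If E(h w) > |w| for an injective morphism h, then h w is a prefix of v^oo
   with |w| |v| < |h w|.  Let d be the least period of h w with |w| d < |h w|;
   it is the least period of h w, and some letter, say a, has |h a| >= d.
   Two occurrences in h w of a factor of length >= d start at positions that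
   are congruent modulo d (otherwise their offset would give a smaller period),
   so two factors a b^g a and a b^g' a of w with g < g' would force h a and h b
   to commute, contradicting injectivity.  Hence all gaps between consecutive
   a's in w are equal, i.e. w = b^j1 (a b^j2)^k a b^j3.
   Conversely, the substitutions a |-> (a b^j2)^n a, a |-> a b^j1 and
   a |-> b^j3 a are injective (each letter's image starts, resp. ends, with
   that letter) and turn such a w into b^(j1+j3) (a b^(j1+j2+j3))^m a b^(j1+j3)
   with m >= n, a prefix of a power of a word of length j1+j2+j3+1.  Composed
   with a uniform binary encoding of Sigma, this gives for every n an injective
   morphism whose image of w has exponent at least n. *)

Section Powers.
Variable T : Type.
Implicit Types p q v : seq T.

Lemma size_flatten_nseq k v : size (flatten (nseq k v)) = k * size v.
Proof. by elim: k => //= k IHk; rewrite size_cat IHk mulSn. Qed.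

Lemma flatten_nseqD m n v :
  flatten (nseq (m + n) v) = flatten (nseq m v) ++ flatten (nseq n v).
Proof. by rewrite nseqD flatten_cat. Qed.

Lemma flatten_nseqSr k v : flatten (nseq k.+1 v) = flatten (nseq k v) ++ v.
Proof. by rewrite -addn1 flatten_nseqD /= cats0. Qed.

Lemma flatten_nseqM m n v :
  flatten (nseq m (flatten (nseq n v))) = flatten (nseq (m * n) v).
Proof. by elim: m => //= m IHm; rewrite IHm mulSn flatten_nseqD. Qed.

Lemma flatten_nseq_shift k p q :
  flatten (nseq k (p ++ q)) ++ p = p ++ flatten (nseq k (q ++ p)).
Proof. by elim: k => [|k IHk] /=; rewrite ?cats0 // -catA IHk !catA. Qed.

Lemma nth_flatten_nseq x0 k v i : i < k * size v ->
  nth x0 (flatten (nseq k v)) i = nth x0 v (i %% size v).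
Proof.
elim: k i => // k IHk i; rewrite mulSn /= nth_cat => i_lt.
have [i_lt_v|v_le_i] := ltnP i (size v); first by rewrite modn_small.
by rewrite IHk -1?{2}(subnK v_le_i) ?modnDr //; lia.
Qed.

Lemma take_flatten_nseq i m n v : i <= m * size v -> i <= n * size v ->
  take i (flatten (nseq m v)) = take i (flatten (nseq n v)).
Proof.
wlog le_mn : m n / m <= n => [wlog_mn|i_le_m _].
  by case: (leqP m n) => [|/ltnW] le_mn *; [|apply/esym]; apply: wlog_mn.
by rewrite -(subnKC le_mn) flatten_nseqD takel_cat // size_flatten_nseq.
Qed.

End Powers.

Section Substitution.
Variables (T T' : eqType) (f : T -> seq T').
Implicit Types u v : seq T.

Definition morph u := flatten (map f u).

Lemma morph_cons c u : morph (c :: u) = f c ++ morph u.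
Proof. by []. Qed.

Lemma morph_cat u v : morph (u ++ v) = morph u ++ morph v.
Proof. by rewrite /morph map_cat flatten_cat. Qed.

Lemma morph_nseq k c : morph (nseq k c) = flatten (nseq k (f c)).
Proof. by elim: k => //= k IHk; rewrite morph_cons IHk. Qed.

Lemma morph_flatten_nseq k u :
  morph (flatten (nseq k u)) = flatten (nseq k (morph u)).
Proof. by elim: k => //= k IHk; rewrite morph_cat IHk. Qed.

Lemma prefix_morph u v : prefix u v -> prefix (morph u) (morph v).
Proof. by case/prefixP=> r ->; apply/prefixP; exists (morph r); rewrite morph_cat. Qed.

Lemma has_long_image d u :
  size u * d < size (morph u) -> has (fun c => d <= size (f c)) u.
Proof.
elim: u => //= c u IHu; rewrite morph_cons size_cat mulSn => lt_u.
by case: (leqP d (size (f c))) => //= f_lt; apply: IHu; lia.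
Qed.

Lemma size_morph_uniform l : (forall c, size (f c) = l) ->
  forall u, size (morph u) = l * size u.
Proof.
by move=> size_f; elim=> [|c u IHu] /=; rewrite ?muln0 // size_cat IHu size_f mulnS.
Qed.

Lemma morph_inj_uniform l : (forall c, size (f c) = l) -> 0 < l -> injective f ->
  injective morph.
Proof.
move=> size_f l_gt0 f_inj; elim=> [|c u IHu] [|c' u'] //=.
- by move/(congr1 size); rewrite size_cat size_f /=; lia.
- by move/(congr1 size); rewrite size_cat size_f /=; lia.
by move/eqP; rewrite eqseq_cat ?size_f // => /andP[/eqP/f_inj-> /eqP/IHu->].
Qed.

End Substitution.

Lemma morph_inj_cons (T : eqType) (f : T -> seq T) :
  (forall c, exists s, f c = c :: s) -> injective (morph f).
Proof.
move=> f_cons; elim=> [|c u IHu] [|c' u'] //=; rewrite /morph /=.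
- by have [s ->] := f_cons c'.
- by have [s ->] := f_cons c.
move=> eq_uu'; have eq_cc' : c = c'.
  by move: eq_uu'; have [s ->] := f_cons c; have [s' ->] := f_cons c' => -[].
by subst c'; move/eqP: eq_uu'; rewrite eqseq_cat // => /andP[_ /eqP/IHu->].
Qed.

Lemma morph_inj_rcons (T : eqType) (f : T -> seq T) :
  (forall c, exists s, f c = rcons s c) -> injective (morph f).
Proof.
move=> f_rcons u u' eq_uu'; apply: (can_inj revK).
apply: (@morph_inj_cons _ (rev \o f)) => [c|] /=.
  by have [s ->] := f_rcons c; exists (rev s); rewrite rev_rcons.
rewrite /morph map_rev map_rev (map_comp rev f) (map_comp rev f).
by rewrite -rev_flatten -rev_flatten; congr rev.
Qed.

Lemma uniform_code (S G : finType) : 1 < #|G| ->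
  exists2 f : S -> seq G, injective f & forall c, size (f c) = #|S|.
Proof.
case/card_gt1P=> g0 [g1 [_ _ g01]].
exists (fun c => [seq if x == c then g1 else g0 | x <- enum S]); last first.
  by move=> c; rewrite size_map cardE.
move=> c c' /(congr1 (nth g0 ^~ (index c (enum S)))).
rewrite !(nth_map c) -?enumT ?index_mem ?mem_enum // nth_index ?mem_enum // eqxx.
by case: eqP => // _ g10; rewrite g10 eqxx in g01.
Qed.

Section Morphism.
Variables (S G : eqType) (h : seq S -> seq G).
Hypothesis h_morph : is_morphism h.

Lemma morphism_nil : h [::] = [::].
Proof.
have := congr1 size (h_morph [::] [::]); rewrite size_cat.
by move/eqP; rewrite -{1}[size _]addn0 eqn_add2l eq_sym size_eq0 => /eqP.
Qed.

Lemma morphismE : h =1 morph (fun c => h [:: c]).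
Proof. by elim=> [|c u IHu]; rewrite ?morphism_nil // morph_cons -IHu -h_morph. Qed.

End Morphism.

Section EvenlySpaced.
Variables (T : eqType) (a b : T).

Definition evenly_spaced k j1 j2 j3 :=
  nseq j1 b ++ flatten (nseq k (a :: nseq j2 b)) ++ a :: nseq j3 b.

Definition gap w g := exists w1 w2, w = w1 ++ a :: nseq g b ++ a :: w2.

Definition letter_subst (X : seq T) (c : T) := if c == a then X else [:: c].

Lemma flatten_nseq_cons_tail k j2 j3 :
  flatten (nseq k (a :: nseq j2 b)) ++ a :: nseq j3 b =
  a :: flatten (nseq k (nseq j2 b ++ [:: a])) ++ nseq j3 b.
Proof.
have /= shift_a := flatten_nseq_shift k [:: a] (nseq j2 b).
by rewrite -[a :: nseq j3 b]cat1s catA shift_a.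
Qed.

Lemma evenly_spaced_prefix k j1 j2 j3 : j1 <= j2 -> j3 <= j2 ->
  prefix (evenly_spaced k j1 j2 j3)
         (flatten (nseq k.+2 (nseq j1 b ++ a :: nseq (j2 - j1) b))).
Proof.
move=> j12 j32; apply/prefixP; exists (nseq (j2 - j3) b ++ a :: nseq (j2 - j1) b).
have QP : (a :: nseq (j2 - j1) b) ++ nseq j1 b = a :: nseq j2 b.
  by rewrite cat_cons -nseqD subnK.
rewrite flatten_nseqSr catA flatten_nseq_shift QP flatten_nseqSr /evenly_spaced -!catA.
by do 2 congr (_ ++ _); rewrite /= catA -nseqD subnKC.
Qed.

Lemma evenly_spaced_of_gaps w : all (pred2 a b) w -> a \in w ->
  (forall g g', gap w g -> gap w g' -> g = g') ->
  exists k j1 j2 j3, w = evenly_spaced k j1 j2 j3.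
Proof.
elim: w => // c w IHw /= /andP[c_ab w_ab] a_in gap_uniq.
have [a_w | a_nw] := boolP (a \in w); last first.
  have -> : c = a by move: a_in; rewrite in_cons (negbTE a_nw) orbF => /eqP.
  exists 0, 0, 0, (size w); congr (_ :: _); apply/all_pred1P/allP => x x_w.
  apply/eqP; have /pred2P[x_a|//] := allP w_ab x x_w.
  by rewrite -x_a x_w in a_nw.
have gap_cons g : gap w g -> gap (c :: w) g by case=> w1 [w2 ->]; exists (c :: w1), w2.
have [k [j1 [j2 [j3 w_eq]]]] := IHw w_ab a_w (fun g g' G G' =>
  gap_uniq g g' (gap_cons g G) (gap_cons g' G')).
case/pred2P: c_ab => ?; subst c; last by exists k, j1.+1, j2, j3; rewrite w_eq.
have gap_j1 : gap (a :: w) j1.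
  by exists [::], (flatten (nseq k (nseq j2 b ++ [:: a])) ++ nseq j3 b);
  rewrite w_eq /evenly_spaced flatten_nseq_cons_tail.
case: k w_eq gap_j1 => [|k] w_eq gap_j1.
  by exists 1, 0, j1, j3; rewrite w_eq /evenly_spaced /= cats0.
have gap_j2 : gap (a :: w) j2.
  exists (a :: nseq j1 b), (flatten (nseq k (nseq j2 b ++ [:: a])) ++ nseq j3 b).
  by rewrite w_eq /evenly_spaced /= -catA flatten_nseq_cons_tail.
exists k.+2, 0, j2, j3; rewrite w_eq (gap_uniq _ _ gap_j1 gap_j2).
by rewrite /evenly_spaced /= -!catA cat_cons -catA.
Qed.

Lemma letter_subst_cons_inj s : injective (morph (letter_subst (a :: s))).
Proof. by apply: morph_inj_cons => c; rewrite /letter_subst; case: eqP => [->|_]; eexists. Qed.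

Lemma letter_subst_rcons_inj s : injective (morph (letter_subst (rcons s a))).
Proof.
apply: morph_inj_rcons => c; rewrite /letter_subst; case: eqP => [->|_]; first by eexists.
by exists [::].
Qed.

Hypothesis a_neq_b : a != b.

Lemma morph_letter_subst_nseq X n : morph (letter_subst X) (nseq n b) = nseq n b.
Proof.
by elim: n => //= n IHn; rewrite morph_cons IHn /letter_subst eq_sym (negbTE a_neq_b).
Qed.

Lemma morph_letter_subst_evenly_spaced K p q r k j1 j2 j3 : q = p + j2 + r ->
  morph (letter_subst (evenly_spaced K p q r)) (evenly_spaced k j1 j2 j3) =
  evenly_spaced (K.+1 * k + K) (j1 + p) q (r + j3).
Proof.
move=> q_eq; set A := a :: nseq q b; set R := flatten (nseq K A) ++ a :: nseq r b.
have RP : (R ++ nseq j2 b) ++ nseq p b = flatten (nseq K.+1 A).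
  rewrite -!catA cat_cons -!nseqD flatten_nseqSr /A q_eq.
  by congr (_ ++ a :: nseq _ b); lia.
rewrite /evenly_spaced !morph_cat morph_flatten_nseq !morph_cons.
rewrite !morph_letter_subst_nseq /letter_subst eqxx -/A -/R.
rewrite -[(nseq p b ++ R) ++ nseq j2 b]catA -[(nseq p b ++ R) ++ nseq j3 b]catA.
rewrite [flatten _ ++ nseq p b ++ _]catA flatten_nseq_shift RP flatten_nseqM.
rewrite nseqD -!catA; do 2 congr (_ ++ _).
by rewrite /R catA -flatten_nseqD cat_cons -nseqD mulnC.
Qed.

End EvenlySpaced.

Section Periods.
Variable G : eqType.
Implicit Types u v : seq G.

Definition periodic d u := take (size u - d) u == drop d u.

Lemma periodicP x0 d u :
  reflect (forall i, i + d < size u -> nth x0 u i = nth x0 u (i + d)) (periodic d u).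
Proof.
have size_take_sub : size (take (size u - d) u) = size u - d by rewrite size_takel ?leq_subr.
apply: (iffP eqP) => [per i i_lt | nth_per].
  by rewrite -(@nth_take (size u - d)) ?ltn_subRL 1?addnC // per nth_drop addnC.
apply: (@eq_from_nth _ x0) => [|i]; rewrite size_take_sub ?size_drop // => i_lt.
by rewrite nth_take // nth_drop addnC nth_per // addnC -ltn_subRL.
Qed.

Lemma periodic_nth_mod x0 d u k : periodic d u -> k < size u ->
  nth x0 u k = nth x0 u (k %% d).
Proof.
move/(periodicP x0) => per; rewrite {1 2}(divn_eq k d) addnC.
elim: (k %/ d) => [|m IHm] lt_u; first by rewrite addn0.
have -> : k %% d + m.+1 * d = (k %% d + m * d) + d by rewrite mulSn; lia.
by rewrite -per ?IHm //; move: lt_u; rewrite mulSn; lia.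
Qed.

Lemma size_rpow v p : v != [::] -> size (rpow v p) = p.
Proof.
move=> v_nil; rewrite /rpow size_takel // size_flatten_nseq leq_pmulr //.
by rewrite lt0n size_eq0.
Qed.

Lemma rpow_periodic v p : v != [::] -> periodic (size v) (rpow v p).
Proof.
case: v => // x0 v _; apply/(periodicP x0) => i; rewrite size_rpow // => i_lt.
have v_gt0 : 0 < size (x0 :: v) by [].
by rewrite /rpow !nth_take ?nth_flatten_nseq ?modnDr //; nia.
Qed.

Lemma prefix_rpow u v K : v != [::] -> prefix u (flatten (nseq K v)) ->
  u = rpow v (size u).
Proof.
move=> v_nil pre_u; have := size_prefix pre_u; rewrite size_flatten_nseq => u_le.
move: pre_u; rewrite prefixE => /eqP {1}<-.
rewrite /rpow (take_flatten_nseq (n := size u) u_le) //.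
by rewrite leq_pmulr // lt0n size_eq0.
Qed.

End Periods.

Section InfiniteWords.
Variables (G : eqType) (x0 : G).
Implicit Types X Y : seq G.

Definition matches (f : nat -> G) i X := forall t, t < size X -> f (i + t) = nth x0 X t.

Lemma periodic_prefixes_comm f X Y :
  (forall t, f (t + size X) = f t) -> (forall t, f (t + size Y) = f t) ->
  matches f 0 X -> matches f 0 Y -> X ++ Y = Y ++ X.
Proof.
have matches_cat U V : (forall t, f (t + size U) = f t) ->
    matches f 0 U -> matches f 0 V -> matches f 0 (U ++ V).
  move=> perU mU mV t; rewrite size_cat nth_cat => t_lt.
  have [t_lt_U|U_le_t] := ltnP t (size U); first exact: mU.
  by rewrite -mV ?add0n -1?{1}(subnK U_le_t) ?perU //; lia.
move=> perX perY mX mY; apply: (@eq_from_nth _ x0); first by rewrite !size_cat addnC.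
move=> t t_lt; rewrite -(matches_cat X Y) // -(matches_cat Y X) //.
by rewrite size_cat addnC -size_cat.
Qed.

Lemma periodic_gaps_comm f d P X Y g g' :
  (forall m n, m = n %[mod d] -> f m = f n) ->
  matches f P X -> matches f (P + size X) (flatten (nseq g' Y)) ->
  d %| size X + g * size Y -> d %| size X + g' * size Y -> g < g' ->
  X ++ Y = Y ++ X.
Proof.
move=> f_mod mX mY dvd_g dvd_g' lt_gg'.
have [/size0nil-> | Y_gt0] := posnP (size Y); first by rewrite cats0.
have f_shift s m : d %| s -> f (m + s) = f m.
  by move=> dvd_s; apply: f_mod; rewrite -modnDmr (eqP dvd_s) addn0.
set M := (g' - g) * size Y.
have M_gt0 : 0 < M by rewrite muln_gt0 subn_gt0 lt_gg'.
have dvd_M : d %| M.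
  have -> : M = (size X + g' * size Y) - (size X + g * size Y) by rewrite /M mulnBl subnDl.
  exact: dvdn_sub.
(* As [d] divides [M] and [size X + g * size Y], [f] shifted by [P] is the infinite
   power [y] of [Y], and [X] is both a prefix and a period of it. *)
pose y t := nth x0 Y (t %% size Y).
have fY t : f (P + size X + t) = y t.
  rewrite (f_mod _ (P + size X + t %% M)); last first.
    by rewrite -[in RHS]modnDmr (modn_dvdm _ dvd_M) modnDmr.
  have tM_lt : t %% M < g' * size Y.
    by apply: leq_trans (ltn_pmod t M_gt0) _; rewrite leq_mul2r leq_subr orbT.
  rewrite mY ?size_flatten_nseq // nth_flatten_nseq //.
  by rewrite /y (modn_dvdm _ (dvdn_mull _ (dvdnn _))).
have fy t : f (P + t) = y t.
  rewrite -(f_shift _ _ dvd_g).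
  have -> : P + t + (size X + g * size Y) = P + size X + (g * size Y + t) by lia.
  by rewrite fY /y modnMDl.
apply: (periodic_prefixes_comm (f := y)) => [t|t|t t_lt|t t_lt].
- by rewrite -fy -fY; congr f; lia.
- by rewrite /y modnDr.
- by rewrite add0n -fy mX.
- by rewrite add0n /y modn_small.
Qed.

End InfiniteWords.

Section MinimalPeriod.
Variables (G : eqType) (x0 : G) (u : seq G) (d : nat).
Hypotheses (d_gt0 : 0 < d) (u_per : periodic d u).
Hypothesis u_min : forall e, 0 < e < d -> ~~ periodic e u.

Let F m := nth x0 u (m %% d).

Let F_mod m n : m = n %[mod d] -> F m = F n.
Proof. by rewrite /F => ->. Qed.

Lemma matches_factor p x s : u = p ++ x ++ s -> matches x0 F (size p) x.
Proof.
move=> u_eq t t_lt; rewrite /F -(periodic_nth_mod _ u_per); last first.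
  by rewrite u_eq !size_cat; lia.
by rewrite u_eq nth_cat ltnNge leq_addr addKn nth_cat t_lt.
Qed.

Lemma matches_sync i j x : d <= size x ->
  matches x0 F i x -> matches x0 F j x -> i = j %[mod d].
Proof.
wlog le_ij : i j / i <= j => [wlog_ij|d_le mi mj].
  by case: (leqP i j) => [|/ltnW] le *; [|apply/esym]; apply: wlog_ij.
have F_ij t : F (i + t) = F (j + t).
  have td_lt : t %% d < size x by apply: leq_trans (ltn_pmod t d_gt0) d_le.
  by rewrite (@F_mod (i + t) (i + t %% d)) ?(@F_mod (j + t) (j + t %% d)) ?modnDmr ?mi ?mj.
set e := (j - i) %% d.
have per_e : periodic e u.
  apply/(periodicP x0) => k k_lt.
  rewrite [LHS](periodic_nth_mod _ u_per) 1?[RHS](periodic_nth_mod _ u_per); try lia.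
  change (F k = F (k + e)); have i_le : i <= i * d by rewrite leq_pmulr.
  rewrite (@F_mod k (i + (k + i * d - i))); last first.
    have -> : i + (k + i * d - i) = i * d + k by lia.
    by rewrite modnMDl.
  rewrite F_ij; apply: F_mod.
  have -> : j + (k + i * d - i) = i * d + (k + (j - i)) by lia.
  by rewrite modnMDl modnDmr.
have e0 : e = 0.
  apply/eqP; apply: contraTT per_e; rewrite -lt0n => e_gt0.
  by apply: u_min; rewrite e_gt0 ltn_pmod.
by apply/esym/eqP; rewrite eqn_mod_dvd // /dvdn -/e e0.
Qed.

Lemma minimal_period_gaps_comm X Y p1 s1 p2 s2 g g' : d <= size X ->
  u = p1 ++ X ++ flatten (nseq g Y) ++ X ++ s1 ->
  u = p2 ++ X ++ flatten (nseq g' Y) ++ X ++ s2 -> g < g' -> X ++ Y = Y ++ X.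
Proof.
move=> d_le u_eq1 u_eq2 lt_gg'.
have gap_dvd p s k : u = p ++ X ++ flatten (nseq k Y) ++ X ++ s ->
    d %| size X + k * size Y.
  move=> u_eq; have mX := matches_factor u_eq.
  have /matches_factor mX' : u = (p ++ X ++ flatten (nseq k Y)) ++ X ++ s.
    by rewrite u_eq -!catA.
  move: (matches_sync d_le mX mX'); rewrite !size_cat size_flatten_nseq addnA.
  by move/eqP; rewrite -{1}[size p]addn0 -addnA eqn_modDl mod0n eq_sym.
apply: (periodic_gaps_comm (f := F) _ (matches_factor u_eq2)) (gap_dvd _ _ _ u_eq1)
  (gap_dvd _ _ _ u_eq2) lt_gg' => //.
rewrite -size_cat; apply: (@matches_factor _ _ (X ++ s2)).
by rewrite u_eq2 -!catA.
Qed.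

End MinimalPeriod.

Section LongLetter.
Variables (S G : eqType) (h : seq S -> seq G) (a b : S).
Hypotheses (h_morph : is_morphism h) (h_inj : injective h) (a_neq_b : a != b).

Lemma evenly_spaced_of_long_image (x0 : G) w d :
  all (pred2 a b) w -> a \in w ->
  0 < d -> periodic d (h w) -> (forall e, 0 < e < d -> ~~ periodic e (h w)) ->
  d <= size (h [:: a]) -> exists k j1 j2 j3, w = evenly_spaced a b k j1 j2 j3.
Proof.
move=> w_ab a_w d_gt0 per min long; apply: evenly_spaced_of_gaps => // g g'.
wlog lt_gg' : g g' / g < g' => [wlog_g|].
  by case: (ltngtP g g') => // lt *; [|apply/esym]; apply: wlog_g.
have h_gap w1 w2 k : w = w1 ++ a :: nseq k b ++ a :: w2 ->
    h w = h w1 ++ h [:: a] ++ flatten (nseq k (h [:: b])) ++ h [:: a] ++ h w2.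
  move=> ->; rewrite [LHS](morphismE h_morph) !(morph_cat, morph_cons, morph_nseq).
  by rewrite -!(morphismE h_morph).
move=> [w1 [w2 /h_gap w_eq]] [w1' [w2' /h_gap w_eq']]; exfalso.
have := minimal_period_gaps_comm x0 d_gt0 per min long w_eq w_eq' lt_gg'.
by rewrite -!h_morph => /h_inj [a_b]; move: a_neq_b; rewrite a_b eqxx.
Qed.

End LongLetter.

Lemma evenly_spaced_of_large_exponent (S G : eqType) (h : seq S -> seq G) (a b : S) w v :
  is_morphism h -> injective h -> a != b -> all (pred2 a b) w -> w != [::] ->
  v != [::] -> h w = rpow v (size (h w)) -> size w * size v < size (h w) ->
  exists k j1 j2 j3, w = evenly_spaced a b k j1 j2 j3 \/ w = evenly_spaced b a k j1 j2 j3.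
Proof.
move=> h_morph h_inj a_neq_b w_ab w_nil v_nil hw_eq hw_size.
have [x0 _] : exists x0 : G, true.
  by case: (h w) hw_size => [|x0 s]; [rewrite ltn0 | exists x0].
have per_v : periodic (size v) (h w) by rewrite hw_eq rpow_periodic.
pose P e := [&& 0 < e, periodic e (h w) & size w * e < size (h w)].
have P_v : P (size v) by rewrite /P lt0n size_eq0 v_nil per_v hw_size.
have [d /and3P[d_gt0 per_d d_bound] d_le] := ex_minnP (ex_intro P _ P_v).
have d_min e : 0 < e < d -> ~~ periodic e (h w).
  case/andP=> e_gt0 lt_ed; apply/negP => per_e.
  have P_e : P e.
    by rewrite /P e_gt0 per_e (leq_ltn_trans _ d_bound) // leq_mul2l ltnW ?orbT.
  by move: (d_le e P_e); rewrite leqNgt lt_ed.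
have /hasP[c c_w long_c] : has (fun c => d <= size (h [:: c])) w.
  by apply: has_long_image; rewrite -(morphismE h_morph).
have w_ba : all (pred2 b a) w by apply: sub_all w_ab => x; rewrite /= orbC.
have b_neq_a : b != a by rewrite eq_sym.
case/pred2P: (allP w_ab c c_w) => c_eq; subst c.
  have [k [j1 [j2 [j3 ->]]]] := evenly_spaced_of_long_image h_morph h_inj a_neq_b x0 w_ab
    c_w d_gt0 per_d d_min long_c.
  by exists k, j1, j2, j3; left.
have [k [j1 [j2 [j3 ->]]]] := evenly_spaced_of_long_image h_morph h_inj b_neq_a x0 w_ba
  c_w d_gt0 per_d d_min long_c.
by exists k, j1, j2, j3; right.
Qed.

Section Exponent.
Local Open Scope ring_scope.
Local Open Scope ereal_scope.

Lemma Eexp_gt (T : eqType) (u : seq T) (M : nat) : (M%:R : RR)%:E < Eexp u ->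
  exists2 v, v != [::] & u = rpow v (size u) /\ (M * size v < size u)%N.
Proof.
case/ereal_sup_gt => _ [r [v [v_nil [p [-> u_eq]]]]] <-.
rewrite lte_fin fmorph_div !rmorph_nat.
have size_u : size u = p by rewrite u_eq size_rpow.
have v_gt0 : (0 < (size v)%:R :> RR)%R by rewrite ltr0n lt0n size_eq0.
by rewrite ltr_pdivlMr // -natrM ltr_nat => lt_Mu; exists v => //; rewrite size_u.
Qed.

Lemma Eexp_ge (T : eqType) (u v : seq T) K (n : nat) : v != [::] ->
  prefix u (flatten (nseq K v)) -> (n * size v <= size u)%N -> (n%:R : RR)%:E <= Eexp u.
Proof.
move=> v_nil pre_u le_nu.
have v_gt0 : (0 < (size v)%:R :> RR)%R by rewrite ltr0n lt0n size_eq0.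
apply: le_trans (ereal_sup_ubound _); last first.
  exists ((size u)%:R / (size v)%:R)%R; last by [].
  by exists v; split=> //; exists (size u); split=> //; exact: prefix_rpow pre_u.
by rewrite lee_fin fmorph_div !rmorph_nat ler_pdivlMr // -natrM ler_nat.
Qed.

Lemma Eexp_morph_evenly_spaced (S G : eqType) (f : S -> seq G) l (a b : S) n k j1 j2 j3 :
  (forall c, size (f c) = l) -> (0 < l)%N -> (n <= k)%N -> (j1 <= j2)%N -> (j3 <= j2)%N ->
  (n%:R : RR)%:E <= Eexp (morph f (evenly_spaced a b k j1 j2 j3)).
Proof.
move=> size_f l_gt0 le_nk le12 le32.
set v := nseq j1 b ++ a :: nseq (j2 - j1) b.
have size_v : size v = j2.+1 by rewrite /v size_cat /= !size_nseq; lia.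
apply: (@Eexp_ge _ _ (morph f v) k.+2).
- by rewrite -size_eq0 (size_morph_uniform size_f) size_v muln_eq0 negb_or -!lt0n l_gt0.
- by rewrite -morph_flatten_nseq; apply/prefix_morph/evenly_spaced_prefix.
rewrite !(size_morph_uniform size_f) size_v /evenly_spaced !size_cat /= !size_nseq.
rewrite size_flatten_nseq /= size_nseq mulnCA leq_mul2l; apply/orP; right.
by apply: leq_trans (leq_mul le_nk (leqnn _)) _; lia.
Qed.

Lemma EI_pinfty (S : Type) (G : eqType) (w : seq S) :
  (forall n : nat, exists2 h : seq S -> seq G, is_morphism h /\ injective h &
     (n%:R : RR)%:E <= Eexp (h w)) -> EI G w = +oo.
Proof.
move=> large; have EI_ge (n : nat) : (n%:R : RR)%:E <= EI G w.
  by have [h h_code le_n] := large n; apply: le_trans le_n (ereal_sup_ubound _); exists h.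
case: (EI G w) EI_ge => [r||] // EI_ge; last by have := EI_ge 0%N.
by have := EI_ge (Num.truncn r).+1; rewrite lee_fin leNgt truncnS_gt.
Qed.

End Exponent.

Lemma EI_evenly_spaced (S G : finType) (a b : S) k j1 j2 j3 : 1 < #|G| -> a != b ->
  EI G (evenly_spaced a b k j1 j2 j3) = +oo%E.
Proof.
move=> G_gt1 a_neq_b; apply: EI_pinfty => n.
have [code code_inj size_code] := uniform_code S G_gt1.
have S_gt0 : 0 < #|S| by apply/card_gt0P; exists a.
pose sigma X := morph (letter_subst a X).
(* The gap arguments of the one-[a] words [X2] and [X3] are irrelevant; they are
   chosen to fit [morph_letter_subst_evenly_spaced]. *)
pose X1 := evenly_spaced a b n 0 j2 0.
pose X2 := evenly_spaced a b 0 0 (j2 + j1) j1.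
pose X3 := evenly_spaced a b 0 j3 (j3 + (j2 + j1)) 0.
exists (fun u => morph code (sigma X3 (sigma X2 (sigma X1 u)))).
  split=> [u u'|]; first by rewrite /sigma !morph_cat.
  apply: inj_comp; first exact: morph_inj_uniform size_code S_gt0 code_inj.
  apply: inj_comp.
    by rewrite /sigma /X3 /evenly_spaced /= cats1; apply: letter_subst_rcons_inj.
  apply: inj_comp; first exact: letter_subst_cons_inj.
  by rewrite /sigma /X1 /evenly_spaced flatten_nseq_cons_tail; apply: letter_subst_cons_inj.
rewrite /sigma /X1 /X2 /X3 !morph_letter_subst_evenly_spaced //; try lia.
by apply: Eexp_morph_evenly_spaced size_code _ _ _ _; nia.
Qed.

Theorem corollary10 (Sigma Gamma : finType) (a b : Sigma) (w : seq Sigma) :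
  (2 <= #|Sigma|)%N -> (2 <= #|Gamma|)%N -> a != b ->
  w != [::] -> all (fun c => (c == a) || (c == b)) w ->
  [/\ (EI Gamma w = +oo%E <-> (((size w)%:R : RR)%:E < EI Gamma w)%E),
      ((((size w)%:R : RR)%:E < EI Gamma w)%E <->
        exists k j1 j2 j3 : nat,
          w = nseq j1 b ++ flatten (nseq k (a :: nseq j2 b)) ++ a :: nseq j3 b \/
          w = nseq j1 a ++ flatten (nseq k (b :: nseq j2 a)) ++ b :: nseq j3 a)
    & (EI Gamma w = +oo%E <->
        exists k j1 j2 j3 : nat,
          w = nseq j1 b ++ flatten (nseq k (a :: nseq j2 b)) ++ a :: nseq j3 b \/
          w = nseq j1 a ++ flatten (nseq k (b :: nseq j2 a)) ++ b :: nseq j3 a)].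
Proof.
(* [2 <= #|Sigma|] is implied by [a != b]. *)
move=> _ Gamma_gt1 a_neq_b w_nil w_ab.
have gt_size_of_pinfty : EI Gamma w = +oo%E -> (((size w)%:R : RR)%:E < EI Gamma w)%E.
  by move=> ->; apply: ltry.
have pinfty_of_evenly_spaced : (exists k j1 j2 j3, w = evenly_spaced a b k j1 j2 j3 \/
                                                  w = evenly_spaced b a k j1 j2 j3) ->
    EI Gamma w = +oo%E.
  case=> k [j1 [j2 [j3 [->|->]]]]; apply: EI_evenly_spaced => //.
  by rewrite eq_sym.
have evenly_spaced_of_gt_size : (((size w)%:R : RR)%:E < EI Gamma w)%E ->
    exists k j1 j2 j3, w = evenly_spaced a b k j1 j2 j3 \/
                       w = evenly_spaced b a k j1 j2 j3.
  case/ereal_sup_gt => _ [h [h_morph h_inj] <-] /Eexp_gt[v v_nil [hw_eq hw_size]].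
  exact: evenly_spaced_of_large_exponent h_morph h_inj a_neq_b w_ab w_nil v_nil hw_eq hw_size.
split; split=> hyp.
- exact: gt_size_of_pinfty.
- exact: pinfty_of_evenly_spaced (evenly_spaced_of_gt_size hyp).
- exact: evenly_spaced_of_gt_size.
- exact: gt_size_of_pinfty (pinfty_of_evenly_spaced hyp).
- exact: evenly_spaced_of_gt_size (gt_size_of_pinfty hyp).
- exact: pinfty_of_evenly_spaced.
Qed.
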